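(* Let $X\subset\mathbb{R}^2$ be a finite set and let $w$ be a point in the interior of $\mathrm{conv}(X)$ which lies on a vertex or an edge of the farthest point Voronoi diagram of $X$. Then there exists a finite collection of points $X'$ such that $\mathrm{conv}(X)$ and $\mathrm{conv}(X')$ have the same extreme points and the quadratic min-power centre of $X'$ is $w$.
   Context: For a finite collection $Y=\{y_j:j\in J\}$ of points in the plane, its quadratic min-power centre is the unique minimiser of $P(s)=\sum_{j\in J}\|s-y_j\|^2+\max_{j\in J}\|s-y_j\|^2$. The farthest point Voronoi diagram of $X$ partitions the plane into the regions $V(x)=\{s:\|s-x\|=\max_{y\in X}\|s-y\|\}$, $x\in X$; its edges and vertices are the one- and zero-dimensional parts of the boundaries between these regions. In this paper a collection of nodes may contain coincident points (several nodes at the same location, each counted in the sum). *)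

From HB Require Import structures.
From mathcomp Require Import all_boot all_order all_algebra.
Set Implicit Arguments. Unset Strict Implicit. Unset Printing Implicit Defensive.
Import Order.TTheory GRing.Theory Num.Theory.
Local Open Scope ring_scope.

Section Plane.
Variable R : realFieldType.

Definition pt := (R * R)%type.

Definition sqdist (p q : pt) : R := (p.1 - q.1) ^+ 2 + (p.2 - q.2) ^+ 2.

Definition in_conv (s : seq pt) (p : pt) : Prop :=
  exists l : 'I_(size s) -> R,
    (forall i, 0 <= l i) /\ \sum_(i < size s) l i = 1 /\
    p.1 = \sum_(i < size s) l i * (nth p s i).1 /\
    p.2 = \sum_(i < size s) l i * (nth p s i).2.

Definition in_interior_conv (s : seq pt) (p : pt) : Prop :=
  exists e : R, 0 < e /\ forall q : pt, sqdist p q < e ^+ 2 -> in_conv s q.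

Definition extreme_point (s : seq pt) (p : pt) : Prop :=
  in_conv s p /\
  forall (a b : pt) (t : R), in_conv s a -> in_conv s b -> 0 < t -> t < 1 ->
    p = ((1 - t) * a.1 + t * b.1, (1 - t) * a.2 + t * b.2) -> a = p /\ b = p.

Definition fpv_region (X : seq pt) (x s : pt) : Prop :=
  forall y, y \in X -> sqdist s y <= sqdist s x.

(* s lies on a vertex or an edge of the farthest point Voronoi diagram of X,
   i.e. on the boundary between (at least) two distinct regions *)
Definition on_fpvd (X : seq pt) (s : pt) : Prop :=
  exists x y, [/\ x \in X, y \in X, x != y, fpv_region X x s & fpv_region X y s].

Definition min_power (Y : seq pt) (s : pt) : R :=
  \sum_(y <- Y) sqdist s y + \big[Num.max/0]_(y <- Y) sqdist s y.

Definition qmp_centre (Y : seq pt) (c : pt) : Prop :=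
  forall s : pt, s != c -> min_power Y c < min_power Y s.

End Plane.

From HB Require Import structures.
From mathcomp Require Import all_boot all_order all_algebra.
From mathcomp Require Import reals ring lra.
Import Order.TTheory GRing.Theory Num.Theory.
Local Open Scope ring_scope.

(* Let x be a node farthest from w; D = |w - x|^2 is positive because w is
   interior.  Since max_j |s - y_j|^2 >= |s - x|^2, with equality at s = w,
   the min-power objective dominates the plain sum of squared distances to the
   nodes and one extra copy of x, and agrees with it at w.  That sum is
   minimised exactly at the centroid, so it suffices to make w the centroid:
   add k copies of z = w + v/k for a suitable v.  For k large, z lies in
   conv(X), so the extreme points do not change, and |w - z|^2 <= D, so x
   stays farthest from w. *)

Section Plane.
Context {R : realFieldType}.
Implicit Types (s L Y : seq (pt R)) (p q c w x y z : pt R).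

Lemma in_conv_cons s z q : in_conv s z -> in_conv (z :: s) q <-> in_conv s q.
Proof.
move=> [mu [mu0 [mu1 [z1 z2]]]]; split.
- move=> [l [l0 [l1 [q1 q2]]]].
  move: l1 q1 q2; rewrite /= !big_ord_recl => l1 q1 q2.
  have nthE (i : 'I_(size s)) : nth z s i = nth q s i by apply: set_nth_default.
  exists (fun i => l (lift ord0 i) + l ord0 * mu i); split; [|split; [|split]].
  + by move=> i; rewrite addr_ge0 ?mulr_ge0.
  + by rewrite big_split /= -mulr_sumr mu1 mulr1 addrC.
  + rewrite q1 /= z1 mulr_sumr -big_split /=; apply: eq_bigr => i _.
    by rewrite nthE; ring.
  + rewrite q2 /= z2 mulr_sumr -big_split /=; apply: eq_bigr => i _.
    by rewrite nthE; ring.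
- move=> [l [l0 [l1 [q1 q2]]]].
  exists (fun j => oapp l 0 (unlift ord0 j)); split; [|split; [|split]].
  + by move=> j; case: (unlift ord0 j) => //= i.
  + rewrite /= big_ord_recl unlift_none /= add0r -l1.
    by apply: eq_bigr => i _; rewrite liftK.
  + rewrite /= big_ord_recl unlift_none /= mul0r add0r q1.
    by apply: eq_bigr => i _; rewrite liftK.
  + rewrite /= big_ord_recl unlift_none /= mul0r add0r q2.
    by apply: eq_bigr => i _; rewrite liftK.
Qed.

Lemma in_conv_ncons s z k q : in_conv s z -> in_conv (ncons k z s) q <-> in_conv s q.
Proof.
move=> zs; elim: k q => [|k IH] q //=.
by rewrite in_conv_cons ?IH //; apply/IH.
Qed.

Lemma extreme_point_conv_eq s L :
  (forall q, in_conv s q <-> in_conv L q) ->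
  forall p, extreme_point s p <-> extreme_point L p.
Proof.
move=> E p; split=> -[pc ext]; split=> [|a b t /E ac /E bc]; by [apply/E | apply: ext].
Qed.

Lemma in_conv_const s c q : (forall y, y \in s -> y = c) -> in_conv s q -> q = c.
Proof.
move=> sc [l [_ [l1 [q1 q2]]]].
have nthE (i : 'I_(size s)) : nth q s i = c by apply/sc/mem_nth.
have sumE (f : pt R -> R) : \sum_(i < size s) l i * f (nth q s i) = f c.
  by under eq_bigr do rewrite nthE; rewrite -mulr_suml l1 mul1r.
by move: q1 q2; rewrite !sumE; case: q c {sc nthE sumE} => ? ? [? ?] /= -> ->.
Qed.

Lemma sqdist_ge0 p q : 0 <= sqdist p q.
Proof. by rewrite addr_ge0 ?sqr_ge0. Qed.

Lemma sqdist_eq0 p q : (sqdist p q == 0) = (p == q).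
Proof.
case: p q => [a b] [c d].
rewrite /sqdist paddr_eq0 ?sqr_ge0 // !sqrf_eq0 !subr_eq0 /=.
by rewrite xpair_eqE.
Qed.

Lemma sqdist_gt0 p q : p != q -> 0 < sqdist p q.
Proof. by move=> pq; rewrite lt_def sqdist_eq0 pq sqdist_ge0. Qed.

Lemma sum_sqdist_expand p L :
  \sum_(y <- L) sqdist p y =
  (size L)%:R * (p.1 ^+ 2 + p.2 ^+ 2) - 2 * p.1 * \sum_(y <- L) y.1
  - 2 * p.2 * \sum_(y <- L) y.2 + \sum_(y <- L) (y.1 ^+ 2 + y.2 ^+ 2).
Proof.
elim: L => [|a L IH]; first by rewrite !big_nil /=; ring.
by rewrite !big_cons IH /= mulrS /sqdist; ring.
Qed.

(* The parallel axis theorem. *)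
Lemma sum_sqdist_centroid L c p :
  (size L)%:R * c.1 = \sum_(y <- L) y.1 ->
  (size L)%:R * c.2 = \sum_(y <- L) y.2 ->
  \sum_(y <- L) sqdist p y = \sum_(y <- L) sqdist c y + (size L)%:R * sqdist p c.
Proof.
by move=> c1 c2; rewrite !sum_sqdist_expand -c1 -c2 /sqdist; ring.
Qed.

Lemma sum_ncons (f : pt R -> R) k z L :
  \sum_(y <- ncons k z L) f y = k%:R * f z + \sum_(y <- L) f y.
Proof.
elim: k => [|k IH] /=; first by rewrite mul0r add0r.
by rewrite big_cons IH mulrS; ring.
Qed.

Lemma qmp_centre_centroid Y x w :
  x \in Y -> fpv_region Y x w ->
  (size Y).+1%:R * w.1 = x.1 + \sum_(y <- Y) y.1 ->
  (size Y).+1%:R * w.2 = x.2 + \sum_(y <- Y) y.2 ->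
  qmp_centre Y w.
Proof.
move=> xY far w1 w2 s sw; rewrite /min_power.
have maxw : \big[Num.max/0]_(y <- Y) sqdist w y = sqdist w x.
  apply/le_anti/andP; split; last exact: le_bigmax_seq _ _ _ _ xY isT.
  by rewrite big_seq; apply: bigmax_le => [|y /far]; rewrite ?sqdist_ge0.
have maxs : sqdist s x <= \big[Num.max/0]_(y <- Y) sqdist s y.
  exact: le_bigmax_seq _ _ _ _ xY isT.
have := @sum_sqdist_centroid (x :: Y) w s; rewrite /= !big_cons => /(_ w1 w2).
have := mulr_gt0 (ltr0Sn R (size Y)) (sqdist_gt0 _ _ sw).
rewrite maxw; lra.
Qed.

Lemma farthest_sqdist_gt0 X x w :
  in_interior_conv X w -> fpv_region X x w -> 0 < sqdist w x.
Proof.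
move=> [e [e0 He]] far; rewrite lt_def sqdist_ge0 andbT; apply/eqP => D0.
have Xw y : y \in X -> y = w.
  move/far; rewrite D0 => wy0; apply/eqP; rewrite eq_sym -sqdist_eq0.
  by rewrite eq_le wy0 sqdist_ge0.
have near : sqdist w (w.1 + e / 2, w.2) < e ^+ 2 by rewrite /sqdist /=; nra.
have /(congr1 fst) /= := in_conv_const _ _ _ Xw (He _ near).
lra.
Qed.

End Plane.

Lemma exists_nat_div_sqr_lt {R : archiFieldType} (a b : R) :
  0 <= a -> 0 < b -> exists2 k : nat, (0 < k)%N & a / k%:R ^+ 2 < b.
Proof.
move=> a0 b0; have := archi_boundP (divr_ge0 a0 (ltW b0)).
set m := Num.Def.archi_bound _ => abm; exists m.+1 => //.
have k1 : 1 <= m.+1%:R :> R by rewrite ler1n.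
have akb : a < m.+1%:R * b.
  by rewrite -ltr_pdivrMr // (lt_le_trans abm) // ler_nat.
rewrite ltr_pdivrMr ?exprn_gt0 ?ltr0Sn //; nra.
Qed.

Theorem proposition4 (R : realType) (X : seq (pt R)) (w : pt R) :
  uniq X ->
  in_interior_conv X w ->
  on_fpvd X w ->
  exists X' : seq (pt R),
    X' != [::] /\
    (forall p : pt R, extreme_point X p <-> extreme_point X' p) /\
    qmp_centre X' w.
Proof.
move=> _ wint [x [_ [xX _ _ far _]]].
have D0 := farthest_sqdist_gt0 _ _ _ wint far; case: wint => e [e0 He].
set v1 := (size X).+1%:R * w.1 - \sum_(y <- X) y.1 - x.1.
set v2 := (size X).+1%:R * w.2 - \sum_(y <- X) y.2 - x.2.
have [||k k0 small] := exists_nat_div_sqr_lt (v1 ^+ 2 + v2 ^+ 2)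
                                             (Num.min (sqdist w x) (e ^+ 2)).
- by rewrite addr_ge0 ?sqr_ge0.
- by rewrite lt_min D0 exprn_gt0.
have kR0 : k%:R != 0 :> R by rewrite pnatr_eq0 -lt0n.
set z := (w.1 + v1 / k%:R, w.2 + v2 / k%:R).
have wz : sqdist w z = (v1 ^+ 2 + v2 ^+ 2) / k%:R ^+ 2 by rewrite /sqdist /=; field.
move: small; rewrite -wz lt_min => /andP [zfar /He zX].
exists (ncons k z X); split; [|split].
- by rewrite -(prednK k0).
- by apply: extreme_point_conv_eq => q; rewrite in_conv_ncons.
apply: (qmp_centre_centroid _ x).
- by rewrite -cat_nseq mem_cat xX orbT.
- move=> y; rewrite -cat_nseq mem_cat => /orP [/nseqP [-> _]|/far //].
  exact: ltW.
- by rewrite size_ncons sum_ncons -addnS natrD /= /v1; field.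
- by rewrite size_ncons sum_ncons -addnS natrD /= /v2; field.
Qed.
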